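(* Let $q\in(0,1)$ and let $\alpha,\beta,z\in\mathbb{C}$ with $|\alpha|<1$ and $z\neq0$. Then the sequences $(\psi_n^{+}(z))_{n\ge-1}$ and $(\psi_n^{-}(z))_{n\ge-1}$ are both solutions of the difference equation \[ \psi_{n-1}-(z+z^{-1})\frac{1-\beta q^n}{1-\alpha q^n}\psi_n+\psi_{n+1}=0,\qquad n\in\mathbb{N}_0. \] Moreover, their Wronskian $W(\psi^+,\psi^-):=\psi_n^+(z)\psi_{n+1}^-(z)-\psi_{n+1}^+(z)\psi_n^-(z)$ (which is independent of $n$) equals \[ W(\psi^+,\psi^-)=z^{-1}\left(z^2,qz^{-2};q\right)_\infty. \] Consequently, $\psi^{+}(z)$ and $\psi^-(z)$ are linearly independent if and only if $z\notin\pm q^{\mathbb{Z}/2}$.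
   Context: For $a\in\mathbb{C}$ and $n\in\mathbb{N}_0\cup\{\infty\}$, $(a;q)_n:=\prod_{j=0}^{n-1}(1-aq^j)$ and $(a_1,\dots,a_r;q)_n:=\prod_i(a_i;q)_n$. For $z\neq0$ define $c_k(z):=\prod_{j=0}^{k-1}\bigl(\alpha(1+z^2q^{2j})-\beta q^j(1+z^2)\bigr)$ (this equals $\alpha^k(z\tau,z\tau^{-1};q)_k$ for any $\tau\ne0$ with $\alpha(\tau+\tau^{-1})=\beta(z+z^{-1})$), and for integers $n\ge-1$, \[ \psi_n^{+}(z):=z^{n}\sum_{k=0}^{\infty}\frac{(q^{k+1}z^{2};q)_\infty}{(q;q)_k}\,c_k(z)\,q^{(n+1)k},\qquad \psi_n^-(z):=\psi_n^+(z^{-1}). \] When $z^2\notin q^{-\mathbb{N}}$ this is $\psi_n^+(z)=z^n(qz^2;q)_\infty\,{}_2\phi_1(z\tau,z\tau^{-1};qz^2;q,\alpha q^{n+1})$, where ${}_2\phi_1(a,b;c;q,w)=\sum_{k\ge0}\frac{(a,b;q)_k}{(c,q;q)_k}w^k$. $q^{\mathbb{Z}/2}$ denotes $\{q^{j/2}:j\in\mathbb{Z}\}$. *)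

From Stdlib Require Import Reals ZArith.
From Coquelicot Require Import Coquelicot.

Open Scope C_scope.

Fixpoint qpoch (a : C) (q : R) (n : nat) : C :=
  match n with
  | O => RtoC 1
  | S m => qpoch a q m * (RtoC 1 - a * RtoC (q ^ m))
  end.

Definition qpoch_inf (a : C) (q : R) : C :=
  @lim (CompleteNormedModule.CompleteSpace _ C_CompleteNormedModule) (filtermap (fun n => qpoch a q n) eventually).

Definition csum (f : nat -> C) : C :=
  @lim (CompleteNormedModule.CompleteSpace _ C_CompleteNormedModule) (filtermap (fun N => sum_n f N) eventually).

Definition zpowC (z : C) (n : Z) : C :=
  match n with
  | Z0 => RtoC 1
  | Zpos p => Cpow z (Pos.to_nat p)
  | Zneg p => / Cpow z (Pos.to_nat p)
  end.

Fixpoint ck (alpha beta : C) (q : R) (z : C) (k : nat) : C :=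
  match k with
  | O => RtoC 1
  | S j => ck alpha beta q z j *
           (alpha * (RtoC 1 + z * z * RtoC (q ^ (2 * j)))
            - beta * RtoC (q ^ j) * (RtoC 1 + z * z))
  end.

(* psi_n^+(z) = z^n sum_k (q^{k+1} z^2;q)_oo / (q;q)_k c_k(z) q^{(n+1)k},
   meaningful for integers n >= -1 *)
Definition psi_plus (alpha beta : C) (q : R) (z : C) (n : Z) : C :=
  zpowC z n *
  csum (fun k => qpoch_inf (RtoC (q ^ (S k)) * (z * z)) q / qpoch (RtoC q) q k
                 * ck alpha beta q z k * RtoC (q ^ (Z.to_nat (n + 1) * k))).

Definition psi_minus (alpha beta : C) (q : R) (z : C) (n : Z) : C :=
  psi_plus alpha beta q (/ z) n.

Definition solves_rec (alpha beta : C) (q : R) (z : C) (psi : Z -> C) : Prop :=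
  forall n : nat,
    psi (Z.of_nat n - 1)%Z
    - (z + / z) * ((RtoC 1 - beta * RtoC (q ^ n)) / (RtoC 1 - alpha * RtoC (q ^ n)))
      * psi (Z.of_nat n)
    + psi (Z.of_nat n + 1)%Z = RtoC 0.

Definition lin_indep (f g : Z -> C) : Prop :=
  forall a b : C, (forall n : Z, (-1 <= n)%Z -> a * f n + b * g n = RtoC 0) ->
    a = RtoC 0 /\ b = RtoC 0.

(* Write psi_n^+(z) = z^n S_{n+1}(z), where S_m = sum_k T_k q^{mk} and
   T_k = (q^{k+1} z^2; q)_oo c_k(z) / (q; q)_k.  The coefficients satisfy
     T_{k+1} (1 - q^{k+1}) (1 - z^2 q^{k+1}) = T_k (alpha (1 + z^2 q^{2k}) - beta q^k (1 + z^2)),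
   and summing this against q^{mk} gives a three-term relation between S_m, S_{m+1}, S_{m+2}
   which is the difference equation for psi^+.  Its coefficient is invariant under z -> 1/z,
   so psi^- solves it too.  The T_k decay geometrically since T_{k+1} / T_k -> alpha.
   The Wronskian of two solutions is constant; as m -> oo, S_m -> T_0 = (q z^2; q)_oo, so
   W = (z^{-1} - z) (q z^2; q)_oo (q z^{-2}; q)_oo = z^{-1} (z^2; q)_oo (q z^{-2}; q)_oo.
   A convergent infinite product (a; q)_oo vanishes only if one of its factors does, so W = 0
   exactly when z^2 is in q^Z, and two solutions are independent iff their Wronskian is not 0. *)

From Stdlib Require Import Reals ZArith Lra Lia Classical.
From Coquelicot Require Import Coquelicot.
Open Scope C_scope.

Lemma Cmult_eq_0 (x y : C) : x * y = 0 -> x = 0 \/ y = 0.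
Proof.
  intros Hxy. destruct (Ceq_dec x 0) as [|Hx]; [now left|right].
  destruct (Ceq_dec y 0) as [|Hy]; [easy|]. now destruct (Cmult_neq_0 x y Hx Hy).
Qed.

Lemma Copp_neq_0 (x : C) : x <> 0 -> - x <> 0.
Proof. intros Hx E. apply Hx. replace x with (- - x) by ring. rewrite E. ring. Qed.

Lemma Cinv_neq_0 (x : C) : x <> 0 -> / x <> 0.
Proof. intros hx E. apply C1_nz. rewrite <- (Cinv_r x hx), E. ring. Qed.

Lemma Cmod_RtoC_pow (q : R) (n : nat) : (0 <= q)%R -> Cmod (RtoC (q ^ n)) = (q ^ n)%R.
Proof. intros Hq. rewrite Cmod_R. apply Rabs_pos_eq, pow_le, Hq. Qed.

Lemma pow_le_one (x : R) (n : nat) : (0 <= x <= 1)%R -> (x ^ n <= 1)%R.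
Proof. intros Hx. rewrite <- (pow1 n). now apply pow_incr. Qed.

Lemma Rle_pow_le_one (x : R) (m n : nat) :
  (0 <= x <= 1)%R -> (m <= n)%nat -> (x ^ n <= x ^ m)%R.
Proof.
  intros Hx Hmn. replace n with (m + (n - m))%nat by lia. rewrite pow_add.
  pose proof (pow_le x m (proj1 Hx)). pose proof (pow_le_one x (n - m) Hx). nra.
Qed.

Lemma exp_le_compat (x y : R) : (x <= y)%R -> (exp x <= exp y)%R.
Proof. intros [Hxy|Hxy]; [left; now apply exp_increasing|rewrite Hxy; lra]. Qed.

Lemma one_sub_mul_pow_neq_0 (alpha : C) (q : R) (n : nat) :
  (0 <= q <= 1)%R -> (Cmod alpha < 1)%R -> 1 - alpha * RtoC (q ^ n) <> 0.
Proof.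
  intros hq ha E.
  assert (Hone : Cmod (alpha * RtoC (q ^ n)) = 1%R).
  { replace (alpha * RtoC (q ^ n)) with (1 - (1 - alpha * RtoC (q ^ n))) by ring.
    rewrite E. replace (1 - 0) with (RtoC 1) by ring. apply Cmod_1. }
  rewrite Cmod_mult, Cmod_RtoC_pow in Hone by lra.
  pose proof (pow_le_one q n hq). pose proof (pow_le q n (proj1 hq)). pose proof (Cmod_ge_0 alpha).
  nra.
Qed.

Lemma RtoC_pow_neq_0 (q : R) (n : nat) : (0 < q)%R -> RtoC (q ^ n) <> 0.
Proof. intros hq E. injection E. pose proof (pow_lt q n hq). lra. Qed.

(** * Limits and series of complex numbers *)

Lemma lim_filtermap_eventually {K : AbsRing} {V : CompleteNormedModule K}
  (u : nat -> V) (l : V) :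
  filterlim u eventually (locally l) ->
  @lim (CompleteNormedModule.CompleteSpace _ V) (filtermap u eventually) = l.
Proof.
  intros Hu.
  set (L := @lim (CompleteNormedModule.CompleteSpace _ V) (filtermap u eventually)).
  assert (HF : ProperFilter (filtermap u eventually))
    by (apply filtermap_proper_filter; apply eventually_filter).
  assert (Hcauchy : cauchy (filtermap u eventually))
    by (intros eps; exists l; apply Hu, locally_ball).
  assert (HL : filterlim u eventually (locally (L : V))).
  { intros P [eps Heps].
    apply (filter_imp (ball L eps)); [exact Heps|].
    now apply complete_cauchy. }
  exact (@filterlim_locally_unique nat K V eventually _ u L l HL Hu).
Qed.

Lemma csum_is_series (f : nat -> C) (l : C) : is_series f l -> csum f = l.
Proof. exact (@lim_filtermap_eventually C_AbsRing C_CompleteNormedModule (sum_n f) l). Qed.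

Lemma qpoch_inf_lim (a : C) (q : R) (l : C) :
  filterlim (qpoch a q) eventually (locally l) -> qpoch_inf a q = l.
Proof. exact (@lim_filtermap_eventually C_AbsRing C_CompleteNormedModule (qpoch a q) l). Qed.

Lemma filterlim_shift_iff {T : Type} (u : nat -> T) (N : nat) (F : (T -> Prop) -> Prop) :
  filterlim (fun n => u (N + n)%nat) eventually F <-> filterlim u eventually F.
Proof.
  split; intros Hu P HP; destruct (Hu P HP) as [M HM].
  - exists (N + M)%nat. intros n Hn.
    replace n with (N + (n - N))%nat by lia. apply HM. lia.
  - exists M. intros n Hn. apply HM. lia.
Qed.

Lemma filterlim_Cplus {T : Type} {F : (T -> Prop) -> Prop} {FF : Filter F}
  (f g : T -> C) (a b : C) :
  filterlim f F (locally a) -> filterlim g F (locally b) ->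
  filterlim (fun x => f x + g x) F (locally (a + b)).
Proof.
  intros Hf Hg. eapply filterlim_comp_2; [exact Hf|exact Hg|].
  exact (@filterlim_plus C_AbsRing C_NormedModule a b).
Qed.

Lemma filterlim_Cminus {T : Type} {F : (T -> Prop) -> Prop} {FF : Filter F}
  (f g : T -> C) (a b : C) :
  filterlim f F (locally a) -> filterlim g F (locally b) ->
  filterlim (fun x => f x - g x) F (locally (a - b)).
Proof.
  intros Hf Hg. apply (filterlim_Cplus f (fun x => - g x) a (- b) Hf).
  exact (filterlim_comp _ _ _ g opp _ _ _ Hg (@filterlim_opp C_AbsRing C_NormedModule b)).
Qed.

(* [filterlim_mult] is stated for the absolute-value uniformity of [C_AbsRing], whereas [C]
   carries the product uniformity; [locally_C] identifies the two neighbourhood filters. *)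
Lemma filterlim_Cmult {T : Type} {F : (T -> Prop) -> Prop} {FF : Filter F}
  (f g : T -> C) (a b : C) :
  filterlim f F (locally a) -> filterlim g F (locally b) ->
  filterlim (fun x => f x * g x) F (locally (a * b)).
Proof.
  intros Hf Hg P HP.
  apply (filterlim_comp_2 (G := @locally (AbsRing_UniformSpace C_AbsRing) a)
           (H := @locally (AbsRing_UniformSpace C_AbsRing) b)
           (I := @locally (AbsRing_UniformSpace C_AbsRing) (a * b))
           f g mult); [| |exact (filterlim_mult a b)|now apply locally_C].
  - intros Q HQ. now apply Hf, locally_C.
  - intros Q HQ. now apply Hg, locally_C.
Qed.

Lemma geom_eventually_lt (K r eps : R) :
  (0 <= r < 1)%R -> (0 < eps)%R -> exists N, forall n, (N <= n)%nat -> (K * r ^ n < eps)%R.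
Proof.
  intros Hr Heps.
  assert (Hy : (0 < eps / (Rabs K + 1))%R)
    by (apply Rdiv_lt_0_compat; [lra|pose proof (Rabs_pos K); lra]).
  destruct (pow_lt_1_zero r ltac:(rewrite Rabs_pos_eq; lra) _ Hy) as [N HN].
  exists N. intros n Hn. specialize (HN n Hn).
  rewrite Rabs_pos_eq in HN by (apply pow_le; lra).
  pose proof (Rabs_pos K). pose proof (pow_le r n (proj1 Hr)).
  apply Rle_lt_trans with (Rabs K * r ^ n)%R.
  { apply Rmult_le_compat_r; [lra|apply Rle_abs]. }
  apply Rle_lt_trans with (Rabs K * (eps / (Rabs K + 1)))%R; [nra|].
  apply (Rmult_lt_reg_r (Rabs K + 1)); [lra|].
  field_simplify; lra.
Qed.

Lemma filterlim_of_geom_bound (u : nat -> C) (l : C) (K r : R) :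
  (0 <= r < 1)%R -> (forall n, Cmod (u n - l) <= K * r ^ n)%R ->
  filterlim u eventually (locally l).
Proof.
  intros Hr Hu. apply (filterlim_locally_ball_norm (U := C_NormedModule)). intros eps.
  destruct (geom_eventually_lt K r eps Hr (cond_pos eps)) as [N HN].
  exists N. intros n Hn. eapply Rle_lt_trans; [apply Hu|]. now apply HN.
Qed.

Lemma Cmod_lim_le (u : nat -> C) (v : nat -> R) (l : C) (L : R) :
  filterlim u eventually (locally l) -> is_lim_seq v L ->
  (forall n, Cmod (u n) <= v n)%R -> (Cmod l <= L)%R.
Proof.
  intros Hu Hv Huv.
  assert (Hnorm : is_lim_seq (fun n => Cmod (u n)) (Cmod l))
    by exact (filterlim_comp _ _ _ u norm _ _ _ Hu (@filterlim_norm C_AbsRing C_NormedModule l)).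
  exact (is_lim_seq_le (fun n => Cmod (u n)) v (Cmod l) L Huv Hnorm Hv).
Qed.

Lemma Cmod_series_le (f : nat -> C) (g : nat -> R) (l : C) (L : R) :
  is_series f l -> is_series g L -> (forall k, Cmod (f k) <= g k)%R -> (Cmod l <= L)%R.
Proof.
  intros Hf Hg Hfg. apply (Cmod_lim_le (sum_n f) (sum_n g) l L Hf Hg).
  intros n. eapply Rle_trans; [exact (@norm_sum_n_m C_AbsRing C_NormedModule f O n)|].
  now apply sum_n_m_le.
Qed.

Lemma is_series_geom_scal (K r : R) :
  (0 <= r < 1)%R -> is_series (fun k => K * r ^ k)%R (K / (1 - r))%R.
Proof.
  intros Hr. apply (is_series_scal_l K (fun k => r ^ k)%R).
  apply is_series_geom. rewrite Rabs_pos_eq; lra.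
Qed.

Lemma ex_series_geom_bound (f : nat -> C) (K r : R) :
  (0 <= r < 1)%R -> (forall k, Cmod (f k) <= K * r ^ k)%R -> ex_series f.
Proof.
  intros Hr Hf. apply (ex_series_le f (fun k => K * r ^ k)%R Hf).
  eexists. now apply is_series_geom_scal.
Qed.

Lemma is_series_C_unique (f : nat -> C) (l l' : C) : is_series f l -> is_series f l' -> l = l'.
Proof.
  exact (@filterlim_locally_unique nat C_AbsRing C_NormedModule eventually _ (sum_n f) l l').
Qed.

Lemma is_series_C_tail (f : nat -> C) (l : C) :
  is_series f l -> is_series (fun k => f (S k)) (l - f O).
Proof.
  intros Hf. apply is_series_incr_1.
  replace l with (l - f O + f O) in Hf by ring. exact Hf.
Qed.

Lemma is_series_lincomb3 (f1 f2 f3 : nat -> C) (l1 l2 l3 c1 c2 c3 : C) :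
  is_series f1 l1 -> is_series f2 l2 -> is_series f3 l3 ->
  is_series (fun k => c1 * f1 k + c2 * f2 k + c3 * f3 k) (c1 * l1 + c2 * l2 + c3 * l3).
Proof.
  intros H1 H2 H3.
  apply (is_series_plus (fun k => c1 * f1 k + c2 * f2 k) (fun k => c3 * f3 k));
    [apply (is_series_plus (fun k => c1 * f1 k) (fun k => c2 * f2 k))|];
    now apply (is_series_scal (V := C_NormedModule)).
Qed.

Lemma sum_n_telescope (u : nat -> C) (n : nat) :
  sum_n (fun j => u (S j) - u j) n = u (S n) - u O.
Proof.
  induction n as [|n IH].
  - now rewrite sum_O.
  - rewrite sum_Sn, IH.
    change (u (S n) - u O + (u (S (S n)) - u (S n)) = u (S (S n)) - u O). ring.
Qed.

Lemma geom_increments_cvg (u : nat -> C) (K r : R) :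
  (0 <= r < 1)%R -> (forall j, Cmod (u (S j) - u j) <= K * r ^ j)%R ->
  exists l, filterlim u eventually (locally l) /\ (Cmod (l - u O) <= K / (1 - r))%R.
Proof.
  intros Hr Hu.
  destruct (ex_series_geom_bound _ K r Hr Hu) as [D HD]. change C in D.
  exists (u O + D). split.
  - apply (filterlim_shift_iff u 1).
    apply (filterlim_ext (fun n => u O + sum_n (fun j => u (S j) - u j) n)).
    { intros n. rewrite sum_n_telescope. simpl. ring. }
    exact (filterlim_Cplus _ _ _ _ (filterlim_const (u O)) HD).
  - replace (u O + D - u O) with D by ring.
    exact (Cmod_series_le _ _ D _ HD (is_series_geom_scal K r Hr) Hu).
Qed.

Lemma geom_bound_of_ratio (u : nat -> C) (r : R) (N : nat) :
  (0 < r)%R -> (forall k, (N <= k)%nat -> Cmod (u (S k)) <= r * Cmod (u k))%R ->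
  exists M, forall k, (Cmod (u k) <= M * r ^ k)%R.
Proof.
  revert u. induction N as [|N IH]; intros u Hr Hratio.
  - exists (Cmod (u O)). induction k as [|k IHk]; simpl; [lra|].
    eapply Rle_trans; [apply Hratio; lia|].
    replace (Cmod (u O) * (r * r ^ k))%R with (r * (Cmod (u O) * r ^ k))%R by ring.
    apply Rmult_le_compat_l; lra.
  - destruct (IH (fun k => u (S k)) Hr (fun k Hk => Hratio (S k) ltac:(lia))) as [M HM].
    exists (Rmax (Cmod (u O)) (M / r)). intros [|k]; simpl.
    + rewrite Rmult_1_r. apply Rmax_l.
    + eapply Rle_trans; [apply HM|].
      replace (M * r ^ k)%R with (M / r * (r * r ^ k))%R by (field; lra).
      apply Rmult_le_compat_r; [apply Rmult_le_pos, pow_le; lra|apply Rmax_r].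
Qed.

(** * q-Pochhammer symbols *)

Section QPochhammer.
Variable q : R.
Hypothesis hq : (0 <= q < 1)%R.

Lemma one_sub_pow_neq_0 (n : nat) : (0 < n)%nat -> 1 - RtoC (q ^ n) <> 0.
Proof.
  intros Hn E. rewrite <- RtoC_minus in E. injection E.
  pose proof (pow_lt_1_compat q n hq Hn). lra.
Qed.

Lemma qpoch_add (a : C) (m n : nat) :
  qpoch a q (m + n) = qpoch a q m * qpoch (a * RtoC (q ^ m)) q n.
Proof.
  induction n as [|n IH]; simpl.
  - rewrite Nat.add_0_r. ring.
  - rewrite Nat.add_succ_r. simpl. rewrite IH, pow_add, RtoC_mult. ring.
Qed.

Lemma Cmod_qpoch_le (a : C) (n : nat) : (Cmod (qpoch a q n) <= exp (Cmod a / (1 - q)))%R.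
Proof.
  assert (Hexp : forall n, (Cmod (qpoch a q n) <= exp (Cmod a * (1 - q ^ n) / (1 - q)))%R).
  { clear n. intros n. induction n as [|n IH]; simpl.
    - rewrite Cmod_1. replace (Cmod a * (1 - 1) / (1 - q))%R with 0%R by (field; lra).
      rewrite exp_0. lra.
    - rewrite Cmod_mult.
      replace (Cmod a * (1 - q * q ^ n) / (1 - q))%R
        with (Cmod a * (1 - q ^ n) / (1 - q) + Cmod a * q ^ n)%R by (field; lra).
      rewrite exp_plus.
      apply Rmult_le_compat; [apply Cmod_ge_0|apply Cmod_ge_0|exact IH|].
      eapply Rle_trans; [|apply exp_ineq1_le].
      eapply Rle_trans; [apply Cmod_triangle|].
      rewrite Cmod_1, Cmod_opp, Cmod_mult, Cmod_RtoC_pow by lra. lra. }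
  eapply Rle_trans; [apply Hexp|]. apply exp_le_compat.
  pose proof (Cmod_ge_0 a). pose proof (pow_le q n (proj1 hq)).
  unfold Rdiv. apply Rmult_le_compat_r; [apply Rlt_le, Rinv_0_lt_compat; lra|]. nra.
Qed.

Lemma qpoch_increment_bound (a : C) (j : nat) :
  (Cmod (qpoch a q (S j) - qpoch a q j) <= Cmod a * exp (Cmod a / (1 - q)) * q ^ j)%R.
Proof.
  replace (qpoch a q (S j) - qpoch a q j) with (- (a * RtoC (q ^ j)) * qpoch a q j)
    by (simpl; ring).
  rewrite Cmod_mult, Cmod_opp, Cmod_mult, Cmod_RtoC_pow by lra.
  pose proof (Cmod_ge_0 a). pose proof (pow_le q j (proj1 hq)).
  replace (Cmod a * exp (Cmod a / (1 - q)) * q ^ j)%R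
    with (Cmod a * q ^ j * exp (Cmod a / (1 - q)))%R by ring.
  apply Rmult_le_compat_l; [nra|apply Cmod_qpoch_le].
Qed.

Lemma qpoch_cvg_dist (a : C) :
  filterlim (qpoch a q) eventually (locally (qpoch_inf a q)) /\
  (Cmod (qpoch_inf a q - 1) <= Cmod a * exp (Cmod a / (1 - q)) / (1 - q))%R.
Proof.
  destruct (geom_increments_cvg (qpoch a q) _ q hq (qpoch_increment_bound a)) as [l [Hl Hd]].
  now rewrite (qpoch_inf_lim a q l Hl).
Qed.

Lemma qpoch_cvg (a : C) : filterlim (qpoch a q) eventually (locally (qpoch_inf a q)).
Proof. apply qpoch_cvg_dist. Qed.

Lemma Cmod_qpoch_inf_le (a : C) : (Cmod (qpoch_inf a q) <= exp (Cmod a / (1 - q)))%R.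
Proof.
  apply (Cmod_lim_le (qpoch a q) (fun _ => exp (Cmod a / (1 - q)))).
  - apply qpoch_cvg.
  - apply is_lim_seq_const.
  - apply Cmod_qpoch_le.
Qed.

Lemma qpoch_inf_split (a : C) (N : nat) :
  qpoch_inf a q = qpoch a q N * qpoch_inf (a * RtoC (q ^ N)) q.
Proof.
  apply qpoch_inf_lim, (filterlim_shift_iff _ N).
  apply (filterlim_ext (fun n => qpoch a q N * qpoch (a * RtoC (q ^ N)) q n));
    [intros n; now rewrite qpoch_add|].
  apply filterlim_Cmult; [apply filterlim_const|apply qpoch_cvg].
Qed.

Lemma qpoch_inf_eq_0 (a : C) (j : nat) : a * RtoC (q ^ j) = 1 -> qpoch_inf a q = 0.
Proof.
  intros Ha. rewrite (qpoch_inf_split a (S j)). simpl. rewrite Ha. ring.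
Qed.

Lemma qpoch_neq_0 (a : C) (n : nat) : (forall j, a * RtoC (q ^ j) <> 1) -> qpoch a q n <> 0.
Proof.
  intros Ha. induction n as [|n IH]; simpl.
  - exact C1_nz.
  - apply Cmult_neq_0; [exact IH|]. intros E. apply (Ha n).
    replace (a * RtoC (q ^ n)) with (1 - (1 - a * RtoC (q ^ n))) by ring. rewrite E. ring.
Qed.

Lemma qpoch_q_neq_0 (k : nat) : qpoch (RtoC q) q k <> 0.
Proof.
  apply qpoch_neq_0. intros j E. rewrite <- RtoC_mult in E. injection E as E.
  change (q * q ^ j)%R with (q ^ S j)%R in E.
  pose proof (pow_lt_1_compat q (S j) hq ltac:(lia)). lra.
Qed.

(* Far enough in, the tail product is within distance 3/4 of 1, hence nonzero. *)
Lemma qpoch_inf_neq_0 (a : C) : (forall j, a * RtoC (q ^ j) <> 1) -> qpoch_inf a q <> 0.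
Proof.
  intros Ha.
  destruct (geom_eventually_lt (Cmod a) q ((1 - q) / 4) hq ltac:(lra)) as [N HN].
  specialize (HN N (Nat.le_refl N)).
  set (b := a * RtoC (q ^ N)).
  assert (Hb : (Cmod b / (1 - q) <= / 4)%R).
  { unfold b. rewrite Cmod_mult, Cmod_RtoC_pow by lra.
    apply (Rmult_le_reg_r (1 - q)); [lra|].
    replace (Cmod a * q ^ N / (1 - q) * (1 - q))%R with (Cmod a * q ^ N)%R by (field; lra). lra. }
  assert (Hexp : (exp (Cmod b / (1 - q)) <= 3)%R).
  { eapply Rle_trans; [apply exp_le_compat with (y := 1%R); lra|apply exp_le_3]. }
  assert (Htail : (Cmod (qpoch_inf b q - 1) < 1)%R).
  { eapply Rle_lt_trans; [apply qpoch_cvg_dist|].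
    pose proof (Cmod_ge_0 b). unfold Rdiv in *.
    replace (Cmod b * exp (Cmod b * / (1 - q)) * / (1 - q))%R
      with (Cmod b * / (1 - q) * exp (Cmod b * / (1 - q)))%R by ring.
    assert (0 <= Cmod b * / (1 - q))%R
      by (apply Rmult_le_pos; [lra|apply Rlt_le, Rinv_0_lt_compat; lra]).
    nra. }
  rewrite (qpoch_inf_split a N). apply Cmult_neq_0; [now apply qpoch_neq_0|].
  intros E. fold b in E. rewrite E in Htail.
  replace (0 - 1) with (- (1)) in Htail by ring. rewrite Cmod_m1 in Htail. lra.
Qed.

Lemma qpoch_inf_eq_0_iff (a : C) : qpoch_inf a q = 0 <-> exists j, a * RtoC (q ^ j) = 1.
Proof.
  split.
  - intros H. apply NNPP. intros Hne. apply (qpoch_inf_neq_0 a); [|exact H].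
    intros j Hj. apply Hne. now exists j.
  - intros [j Hj]. exact (qpoch_inf_eq_0 a j Hj).
Qed.

End QPochhammer.

(** * Three-term recurrences *)

Definition three_term (c : nat -> C) (f : Z -> C) : Prop :=
  forall n : nat, f (Z.of_nat n - 1)%Z - c n * f (Z.of_nat n) + f (Z.of_nat n + 1)%Z = 0.

Definition wronskian (f g : Z -> C) (n : Z) : C := f n * g (n + 1)%Z - f (n + 1)%Z * g n.

Lemma det2_eq_0_kernel (A B A' B' : C) :
  A * B' - A' * B = 0 ->
  exists a b : C, (a <> 0 \/ b <> 0) /\ a * A + b * B = 0 /\ a * A' + b * B' = 0.
Proof.
  intros Hdet.
  assert (Hkernel : B * A' + - A * B' = 0)
    by (replace (B * A' + - A * B') with (- (A * B' - A' * B)) by ring; rewrite Hdet; ring).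
  destruct (Ceq_dec B 0) as [HB|HB]; [destruct (Ceq_dec A 0) as [HA|HA]|].
  - destruct (Ceq_dec A' 0) as [HA'|HA'].
    + exists 1, 0. split; [left; exact C1_nz|]. rewrite HA, HB, HA'. split; ring.
    + exists B', (- A'). split; [right; now apply Copp_neq_0|]. rewrite HA, HB. split; ring.
  - exists B, (- A). split; [right; now apply Copp_neq_0|]. split; [ring|exact Hkernel].
  - exists B, (- A). split; [now left|]. split; [ring|exact Hkernel].
Qed.

Section ThreeTerm.
Variable c : nat -> C.

Lemma three_term_next (f : Z -> C) (n : nat) : three_term c f ->
  f (Z.of_nat n + 1)%Z = c n * f (Z.of_nat n) - f (Z.of_nat n - 1)%Z.
Proof.
  intros Hf.
  transitivity (c n * f (Z.of_nat n) - f (Z.of_nat n - 1)%Z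
                + (f (Z.of_nat n - 1)%Z - c n * f (Z.of_nat n) + f (Z.of_nat n + 1)%Z)); [ring|].
  rewrite (Hf n). ring.
Qed.

Lemma three_term_lincomb (f g : Z -> C) (a b : C) :
  three_term c f -> three_term c g -> three_term c (fun n => a * f n + b * g n).
Proof.
  intros Hf Hg n.
  replace (a * f (Z.of_nat n - 1)%Z + b * g (Z.of_nat n - 1)%Z
           - c n * (a * f (Z.of_nat n) + b * g (Z.of_nat n))
           + (a * f (Z.of_nat n + 1)%Z + b * g (Z.of_nat n + 1)%Z))
    with (a * (f (Z.of_nat n - 1)%Z - c n * f (Z.of_nat n) + f (Z.of_nat n + 1)%Z)
          + b * (g (Z.of_nat n - 1)%Z - c n * g (Z.of_nat n) + g (Z.of_nat n + 1)%Z)) by ring.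
  rewrite Hf, Hg. ring.
Qed.

Lemma three_term_vanish (h : Z -> C) :
  three_term c h -> h (-1)%Z = 0 -> h 0%Z = 0 -> forall n, (-1 <= n)%Z -> h n = 0.
Proof.
  intros Hh Hm1 H0.
  assert (Hpair : forall m : nat, h (Z.of_nat m - 1)%Z = 0 /\ h (Z.of_nat m) = 0).
  { induction m as [|m [IH1 IH2]]; [now split|].
    replace (Z.of_nat (S m) - 1)%Z with (Z.of_nat m) by lia.
    replace (Z.of_nat (S m)) with (Z.of_nat m + 1)%Z by lia.
    split; [exact IH2|]. rewrite (three_term_next h m Hh), IH1, IH2. ring. }
  intros n Hn. replace n with (Z.of_nat (Z.to_nat (n + 1)) - 1)%Z by lia. apply Hpair.
Qed.

Variables f g : Z -> C.
Hypotheses (hf : three_term c f) (hg : three_term c g).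

Lemma wronskian_const (n : Z) : (-1 <= n)%Z -> wronskian f g n = wronskian f g (-1).
Proof.
  intros Hn. replace n with (Z.of_nat (Z.to_nat (n + 1)) - 1)%Z by lia.
  induction (Z.to_nat (n + 1)) as [|m IH]; [reflexivity|].
  rewrite <- IH. unfold wronskian.
  replace (Z.of_nat (S m) - 1)%Z with (Z.of_nat m) by lia.
  replace (Z.of_nat m - 1 + 1)%Z with (Z.of_nat m) by lia.
  rewrite (three_term_next f m hf), (three_term_next g m hg). ring.
Qed.

Lemma lin_indep_iff_wronskian : lin_indep f g <-> wronskian f g (-1) <> 0.
Proof.
  unfold wronskian; simpl (-1 + 1)%Z. split.
  - intros Hind HW.
    destruct (det2_eq_0_kernel _ _ _ _ HW) as [a [b [Hab [Hm1 H0]]]].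
    assert (Hvanish := three_term_vanish _ (three_term_lincomb f g a b hf hg) Hm1 H0).
    destruct (Hind a b Hvanish) as [Ha Hb]. tauto.
  - intros HW a b Hab.
    pose proof (Hab (-1)%Z ltac:(lia)) as Hm1. pose proof (Hab 0%Z ltac:(lia)) as H0.
    split.
    + assert (Ha : a * (f (-1)%Z * g 0%Z - f 0%Z * g (-1)%Z) = 0).
      { replace (a * (f (-1)%Z * g 0%Z - f 0%Z * g (-1)%Z))
          with (g 0%Z * (a * f (-1)%Z + b * g (-1)%Z) - g (-1)%Z * (a * f 0%Z + b * g 0%Z))
          by ring. rewrite Hm1, H0. ring. }
      destruct (Cmult_eq_0 _ _ Ha); tauto.
    + assert (Hb : b * (f (-1)%Z * g 0%Z - f 0%Z * g (-1)%Z) = 0).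
      { replace (b * (f (-1)%Z * g 0%Z - f 0%Z * g (-1)%Z))
          with (f (-1)%Z * (a * f 0%Z + b * g 0%Z) - f 0%Z * (a * f (-1)%Z + b * g (-1)%Z))
          by ring. rewrite Hm1, H0. ring. }
      destruct (Cmult_eq_0 _ _ Hb); tauto.
Qed.

End ThreeTerm.

(** * The series defining psi *)

Section PsiSeries.
Variables (alpha beta : C) (q : R) (z : C).
Hypothesis hq : (0 <= q < 1)%R.
Hypothesis ha : (Cmod alpha < 1)%R.

Definition ck_factor (k : nat) : C :=
  alpha * (1 + z * z * RtoC (q ^ (2 * k))) - beta * RtoC (q ^ k) * (1 + z * z).

Definition psi_coef (k : nat) : C :=
  qpoch_inf (RtoC (q ^ S k) * (z * z)) q / qpoch (RtoC q) q k * ck alpha beta q z k.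

Definition psi_term (m k : nat) : C := psi_coef k * RtoC (q ^ (m * k)).

Definition psi_series (m : nat) : C := csum (psi_term m).

Lemma psi_plus_eq_series (n : Z) :
  psi_plus alpha beta q z n = zpowC z n * psi_series (Z.to_nat (n + 1)).
Proof. reflexivity. Qed.

Lemma Cmod_ck_factor_le (k : nat) :
  (Cmod (ck_factor k) <= Cmod alpha
     + (Cmod alpha * Cmod (z * z) + Cmod beta * (1 + Cmod (z * z))) * q ^ k)%R.
Proof.
  unfold ck_factor. set (w := z * z).
  pose proof (pow_le q k (proj1 hq)).
  assert (Hq2k : (q ^ (2 * k) <= q ^ k)%R) by (apply Rle_pow_le_one; lra || lia).
  pose proof (Cmod_ge_0 alpha). pose proof (Cmod_ge_0 beta). pose proof (Cmod_ge_0 w).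
  assert (Hfirst : (Cmod (1 + w * RtoC (q ^ (2 * k))) <= 1 + Cmod w * q ^ k)%R).
  { eapply Rle_trans; [apply Cmod_triangle|].
    rewrite Cmod_1, Cmod_mult, Cmod_RtoC_pow by lra. nra. }
  assert (Hsecond : (Cmod (1 + w) <= 1 + Cmod w)%R).
  { eapply Rle_trans; [apply Cmod_triangle|]. rewrite Cmod_1. lra. }
  eapply Rle_trans; [apply Cmod_triangle|]. rewrite Cmod_opp, !Cmod_mult, Cmod_RtoC_pow by lra.
  assert (Cmod alpha * Cmod (1 + w * RtoC (q ^ (2 * k)))
            <= Cmod alpha * (1 + Cmod w * q ^ k))%R by (apply Rmult_le_compat_l; lra).
  assert (Cmod beta * q ^ k * Cmod (1 + w) <= Cmod beta * q ^ k * (1 + Cmod w))%R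
    by (apply Rmult_le_compat_l; nra).
  nra.
Qed.

Lemma ck_div_qpoch_succ (k : nat) :
  ck alpha beta q z (S k) / qpoch (RtoC q) q (S k)
  = ck alpha beta q z k / qpoch (RtoC q) q k * (ck_factor k / (1 - RtoC (q ^ S k))).
Proof.
  cbn [ck qpoch]. unfold ck_factor. rewrite <- RtoC_mult.
  change (q * q ^ k)%R with (q ^ S k)%R.
  field. split; [apply (one_sub_pow_neq_0 q hq); lia|apply (qpoch_q_neq_0 q hq)].
Qed.

(* The ratio tends to [alpha]; [(1 + |alpha|) / 2] lies strictly between [|alpha|] and 1. *)
Lemma ck_div_qpoch_ratio_le : exists N, forall k, (N <= k)%nat ->
  (Cmod (ck alpha beta q z (S k) / qpoch (RtoC q) q (S k))
   <= (1 + Cmod alpha) / 2 * Cmod (ck alpha beta q z k / qpoch (RtoC q) q k))%R.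
Proof.
  set (r := ((1 + Cmod alpha) / 2)%R).
  set (Cz := (Cmod alpha * Cmod (z * z) + Cmod beta * (1 + Cmod (z * z)))%R).
  pose proof (Cmod_ge_0 alpha).
  destruct (geom_eventually_lt (Cz + r) q ((1 - Cmod alpha) / 2) hq ltac:(lra)) as [N HN].
  exists N. intros k Hk. rewrite ck_div_qpoch_succ, Cmod_mult, (Rmult_comm r).
  apply Rmult_le_compat_l; [apply Cmod_ge_0|].
  pose proof (pow_lt_1_compat q (S k) hq ltac:(lia)) as HqSk.
  rewrite Cmod_div by (apply (one_sub_pow_neq_0 q hq); lia).
  rewrite <- RtoC_minus, Cmod_R, Rabs_pos_eq by lra.
  apply (Rmult_le_reg_r (1 - q ^ S k)); [lra|].
  unfold Rdiv. rewrite Rmult_assoc, Rinv_l, Rmult_1_r by lra.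
  assert (Hqk : (q ^ S k <= q ^ k)%R) by (apply Rle_pow_le_one; lra || lia).
  pose proof (HN k Hk). pose proof (Cmod_ck_factor_le k).
  pose proof (pow_le q k (proj1 hq)). unfold r, Cz in *. nra.
Qed.

Lemma psi_coef_geom : exists M r, (0 <= r < 1)%R /\ forall k, (Cmod (psi_coef k) <= M * r ^ k)%R.
Proof.
  pose proof (Cmod_ge_0 alpha).
  destruct ck_div_qpoch_ratio_le as [N Hratio].
  destruct (geom_bound_of_ratio _ ((1 + Cmod alpha) / 2) N ltac:(lra) Hratio) as [M HM].
  set (E := exp (Cmod (z * z) / (1 - q))).
  exists (E * M)%R, ((1 + Cmod alpha) / 2)%R. split; [lra|]. intros k.
  replace (psi_coef k) with (qpoch_inf (RtoC (q ^ S k) * (z * z)) q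
                            * (ck alpha beta q z k / qpoch (RtoC q) q k))
    by (unfold psi_coef, Cdiv; ring).
  rewrite Cmod_mult, Rmult_assoc.
  apply Rmult_le_compat; [apply Cmod_ge_0|apply Cmod_ge_0| |exact (HM k)].
  eapply Rle_trans; [apply Cmod_qpoch_inf_le; exact hq|]. apply exp_le_compat.
  unfold Rdiv. apply Rmult_le_compat_r; [apply Rlt_le, Rinv_0_lt_compat; lra|].
  rewrite Cmod_mult, Cmod_RtoC_pow by lra.
  pose proof (pow_le_one q (S k) ltac:(lra)). pose proof (Cmod_ge_0 (z * z)). nra.
Qed.

Lemma psi_coef_shift (k : nat) :
  psi_coef (S k) * ((1 - RtoC (q ^ S k)) * (1 - RtoC (q ^ S k) * (z * z)))
  = psi_coef k * ck_factor k.
Proof.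
  unfold psi_coef.
  rewrite (qpoch_inf_split q hq (RtoC (q ^ S k) * (z * z)) 1).
  replace (RtoC (q ^ S k) * (z * z) * RtoC (q ^ 1)) with (RtoC (q ^ S (S k)) * (z * z))
    by (rewrite !RtoC_pow; cbn [Cpow]; ring).
  cbn [qpoch ck]. unfold ck_factor. rewrite pow_O, <- RtoC_mult.
  change (q * q ^ k)%R with (q ^ S k)%R.
  field. split; [apply (qpoch_q_neq_0 q hq)|apply (one_sub_pow_neq_0 q hq); lia].
Qed.

Lemma Cmod_psi_term_le (m k : nat) : (Cmod (psi_term m k) <= Cmod (psi_coef k))%R.
Proof.
  unfold psi_term. rewrite Cmod_mult, Cmod_RtoC_pow by lra.
  pose proof (pow_le_one q (m * k) ltac:(lra)). pose proof (Cmod_ge_0 (psi_coef k)). nra.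
Qed.

Lemma is_series_psi_term (m : nat) : is_series (psi_term m) (psi_series m).
Proof.
  destruct psi_coef_geom as [M [r [Hr HM]]].
  assert (Hex : ex_series (psi_term m)).
  { apply (ex_series_geom_bound _ M r Hr). intros k.
    eapply Rle_trans; [apply Cmod_psi_term_le|apply HM]. }
  destruct Hex as [l Hl]. unfold psi_series. now rewrite (csum_is_series _ l Hl).
Qed.

Lemma psi_term_add (m j k : nat) : psi_term (m + j) k = psi_term m k * RtoC (q ^ (j * k)).
Proof.
  unfold psi_term. rewrite <- Cmult_assoc, <- RtoC_mult, <- pow_add.
  do 3 f_equal. lia.
Qed.

Definition psi_weighted (m k : nat) : C :=
  psi_term m k * ((1 - RtoC (q ^ k)) * (1 - RtoC (q ^ k) * (z * z))).

Lemma is_series_psi_weighted (m : nat) :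
  is_series (psi_weighted m)
    (psi_series m - (1 + z * z) * psi_series (m + 1) + z * z * psi_series (m + 2)).
Proof.
  replace (psi_series m - (1 + z * z) * psi_series (m + 1) + z * z * psi_series (m + 2))
    with (1 * psi_series m + (- (1 + z * z)) * psi_series (m + 1) + (z * z) * psi_series (m + 2))
    by ring.
  apply (is_series_ext (fun k => 1 * psi_term m k + (- (1 + z * z)) * psi_term (m + 1) k
                                 + (z * z) * psi_term (m + 2) k));
    [|apply is_series_lincomb3; apply is_series_psi_term].
  intros k. simpl. unfold psi_weighted. rewrite !psi_term_add, Nat.mul_1_l.
  replace (2 * k)%nat with (k + k)%nat by lia. rewrite pow_add, RtoC_mult. ring.
Qed.

Lemma is_series_psi_weighted_succ (m : nat) :
  is_series (fun k => psi_weighted m (S k))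
    (RtoC (q ^ m) * (alpha * (psi_series m + z * z * psi_series (m + 2))
                     - beta * (1 + z * z) * psi_series (m + 1))).
Proof.
  replace (alpha * (psi_series m + z * z * psi_series (m + 2))
           - beta * (1 + z * z) * psi_series (m + 1))
    with (alpha * psi_series m + (- (beta * (1 + z * z))) * psi_series (m + 1)
          + (alpha * (z * z)) * psi_series (m + 2)) by ring.
  apply (is_series_ext (fun k => RtoC (q ^ m) * (alpha * psi_term m k
                         + (- (beta * (1 + z * z))) * psi_term (m + 1) k
                         + (alpha * (z * z)) * psi_term (m + 2) k)));
    [|apply (is_series_scal (V := C_NormedModule)), is_series_lincomb3; apply is_series_psi_term].
  intros k. simpl. unfold psi_weighted. rewrite !psi_term_add. unfold psi_term.
  replace (psi_coef (S k) * RtoC (q ^ (m * S k))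
           * ((1 - RtoC (q ^ S k)) * (1 - RtoC (q ^ S k) * (z * z))))
    with (RtoC (q ^ (m * S k))
          * (psi_coef (S k) * ((1 - RtoC (q ^ S k)) * (1 - RtoC (q ^ S k) * (z * z)))))
    by ring.
  rewrite psi_coef_shift. unfold ck_factor.
  rewrite Nat.mul_1_l, Nat.mul_succ_r, pow_add, RtoC_mult.
  replace (2 * k)%nat with (k + k)%nat by lia. rewrite pow_add, RtoC_mult. ring.
Qed.

(* Dropping the vanishing [k = 0] term of the first series leaves the second one. *)
Lemma psi_series_rec (m : nat) :
  (1 - alpha * RtoC (q ^ m)) * (psi_series m + z * z * psi_series (m + 2))
  - (1 + z * z) * (1 - beta * RtoC (q ^ m)) * psi_series (m + 1) = 0.
Proof.
  assert (Hhead : psi_weighted m O = 0) by (unfold psi_weighted; rewrite pow_O; ring).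
  pose proof (is_series_C_unique _ _ _ (is_series_C_tail _ _ (is_series_psi_weighted m))
                (is_series_psi_weighted_succ m)) as Heq.
  rewrite Hhead in Heq.
  transitivity (psi_series m - (1 + z * z) * psi_series (m + 1) + z * z * psi_series (m + 2) - 0
    - RtoC (q ^ m) * (alpha * (psi_series m + z * z * psi_series (m + 2))
                      - beta * (1 + z * z) * psi_series (m + 1))); [ring|].
  rewrite Heq. ring.
Qed.

Lemma psi_series_cvg : filterlim psi_series eventually (locally (psi_coef 0)).
Proof.
  destruct psi_coef_geom as [M [r [Hr HM]]].
  apply (filterlim_of_geom_bound _ _ (M * r / (1 - r)) q hq). intros m.
  pose proof (is_series_C_tail _ _ (is_series_psi_term m)) as Htail.
  replace (psi_term m O) with (psi_coef 0) in Htail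
    by (unfold psi_term; rewrite Nat.mul_0_r, pow_O; ring).
  replace (M * r / (1 - r) * q ^ m)%R with (M * r * q ^ m / (1 - r))%R by (field; lra).
  apply (Cmod_series_le _ _ _ _ Htail (is_series_geom_scal _ r Hr)). intros k.
  unfold psi_term. rewrite Cmod_mult, Cmod_RtoC_pow by lra.
  assert (Hpow : (q ^ (m * S k) <= q ^ m)%R) by (apply Rle_pow_le_one; [lra|nia]).
  pose proof (HM (S k)). pose proof (Cmod_ge_0 (psi_coef (S k))).
  pose proof (pow_le q (m * S k) (proj1 hq)).
  apply Rle_trans with (M * r ^ S k * q ^ m)%R.
  - apply Rmult_le_compat; lra.
  - simpl. lra.
Qed.

Lemma psi_coef_0 : psi_coef 0 = qpoch_inf (RtoC q * (z * z)) q.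
Proof. unfold psi_coef. cbn [qpoch ck]. rewrite pow_1. field. Qed.

End PsiSeries.

(** * The difference equation and the Wronskian *)

Lemma zpowC_of_nat (z : C) (n : nat) : zpowC z (Z.of_nat n) = z ^ n.
Proof. destruct n as [|n]; [reflexivity|]. simpl. now rewrite SuccNat2Pos.id_succ. Qed.

Lemma zpowC_succ (z : C) (n : nat) : zpowC z (Z.of_nat n + 1) = z ^ n * z.
Proof.
  replace (Z.of_nat n + 1)%Z with (Z.of_nat (S n)) by lia.
  rewrite zpowC_of_nat, Cpow_S. ring.
Qed.

Lemma zpowC_pred (z : C) (n : nat) : z <> 0 -> zpowC z (Z.of_nat n - 1) = z ^ n / z.
Proof.
  intros hz. destruct n as [|n]; [simpl; field; exact hz|].
  replace (Z.of_nat (S n) - 1)%Z with (Z.of_nat n) by lia.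
  rewrite zpowC_of_nat, Cpow_S. field. exact hz.
Qed.

Definition rec_coef (alpha beta : C) (q : R) (z : C) (n : nat) : C :=
  (z + / z) * ((1 - beta * RtoC (q ^ n)) / (1 - alpha * RtoC (q ^ n))).

Lemma solves_rec_three_term (alpha beta : C) (q : R) (z : C) (psi : Z -> C) :
  solves_rec alpha beta q z psi <-> three_term (rec_coef alpha beta q z) psi.
Proof. reflexivity. Qed.

Lemma psi_plus_three_term (alpha beta : C) (q : R) (z : C) :
  (0 <= q < 1)%R -> (Cmod alpha < 1)%R -> z <> 0 ->
  three_term (rec_coef alpha beta q z) (psi_plus alpha beta q z).
Proof.
  intros hq ha hz n. rewrite !psi_plus_eq_series.
  replace (Z.to_nat (Z.of_nat n - 1 + 1)) with n by lia.
  replace (Z.to_nat (Z.of_nat n + 1)) with (n + 1)%nat by lia.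
  replace (Z.to_nat (Z.of_nat n + 1 + 1)) with (n + 2)%nat by lia.
  rewrite zpowC_pred, zpowC_of_nat, zpowC_succ by exact hz.
  pose proof (one_sub_mul_pow_neq_0 alpha q n ltac:(lra) ha) as Hden.
  transitivity (z ^ n / z / (1 - alpha * RtoC (q ^ n)) *
    ((1 - alpha * RtoC (q ^ n)) * (psi_series alpha beta q z n
                                    + z * z * psi_series alpha beta q z (n + 2))
     - (1 + z * z) * (1 - beta * RtoC (q ^ n)) * psi_series alpha beta q z (n + 1))).
  - unfold rec_coef. field. split; assumption.
  - rewrite (psi_series_rec alpha beta q z hq ha n). ring.
Qed.

Section Wronskian.
Variables (alpha beta : C) (q : R) (z : C).
Hypotheses (hq : (0 <= q < 1)%R) (ha : (Cmod alpha < 1)%R) (hz : z <> 0).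

Lemma psi_minus_three_term : three_term (rec_coef alpha beta q z) (psi_minus alpha beta q z).
Proof.
  intros n. unfold psi_minus.
  replace (rec_coef alpha beta q z n) with (rec_coef alpha beta q (/ z) n)
    by (unfold rec_coef; f_equal; field; exact hz).
  exact (psi_plus_three_term alpha beta q (/ z) hq ha (Cinv_neq_0 z hz) n).
Qed.

Lemma psi_wronskian_series (m : nat) :
  wronskian (psi_plus alpha beta q z) (psi_minus alpha beta q z) (Z.of_nat m - 1)
  = / z * psi_series alpha beta q z m * psi_series alpha beta q (/ z) (S m)
    - z * psi_series alpha beta q z (S m) * psi_series alpha beta q (/ z) m.
Proof.
  unfold wronskian, psi_minus. rewrite !psi_plus_eq_series.
  replace (Z.of_nat m - 1 + 1)%Z with (Z.of_nat m) by lia.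
  rewrite Nat2Z.id.
  replace (Z.to_nat (Z.of_nat m + 1)) with (S m) by lia.
  rewrite !zpowC_pred, !zpowC_of_nat, Cpow_inv by (exact hz || exact (Cinv_neq_0 z hz)).
  field. split; [exact hz|apply Cpow_nz; exact hz].
Qed.

Lemma psi_wronskian (n : Z) : (-1 <= n)%Z ->
  wronskian (psi_plus alpha beta q z) (psi_minus alpha beta q z) n
  = / z * (qpoch_inf (z * z) q * qpoch_inf (RtoC q * / (z * z)) q).
Proof.
  intros Hn.
  set (W := wronskian (psi_plus alpha beta q z) (psi_minus alpha beta q z)).
  assert (Hconst : forall n, (-1 <= n)%Z -> W n = W (-1)%Z)
    by exact (wronskian_const _ _ _ (psi_plus_three_term alpha beta q z hq ha hz)
                psi_minus_three_term).
  assert (Hconst_lim : filterlim (fun m : nat => W (Z.of_nat m - 1)%Z) eventually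
                         (locally (W (-1)%Z))).
  { apply (filterlim_ext (fun _ => W (-1)%Z)); [|apply filterlim_const].
    intros m. symmetry. apply Hconst. lia. }
  set (Sp := psi_series alpha beta q z). set (Sm := psi_series alpha beta q (/ z)).
  set (P := psi_coef alpha beta q z 0). set (M := psi_coef alpha beta q (/ z) 0).
  assert (Hlim : filterlim (fun m : nat => W (Z.of_nat m - 1)%Z) eventually
                   (locally (/ z * P * M - z * P * M))).
  { apply (filterlim_ext (fun m => / z * Sp m * Sm (S m) - z * Sp (S m) * Sm m));
      [intros m; symmetry; apply psi_wronskian_series|].
    pose proof (psi_series_cvg alpha beta q z hq ha) as Hp.
    pose proof (psi_series_cvg alpha beta q (/ z) hq ha) as Hm.
    pose proof (proj2 (filterlim_shift_iff _ 1 _) Hp) as Hp1.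
    pose proof (proj2 (filterlim_shift_iff _ 1 _) Hm) as Hm1.
    apply filterlim_Cminus; repeat apply filterlim_Cmult; (apply filterlim_const || assumption). }
  rewrite (Hconst n Hn),
    (@filterlim_locally_unique nat C_AbsRing C_NormedModule eventually _ _ _ _ Hconst_lim Hlim).
  unfold P, M. rewrite !psi_coef_0, (qpoch_inf_split q hq (z * z) 1). cbn [qpoch].
  rewrite pow_O, pow_1.
  replace (z * z * RtoC q) with (RtoC q * (z * z)) by ring.
  replace (/ z * / z) with (/ (z * z)) by (field; exact hz).
  field. exact hz.
Qed.

End Wronskian.

(** * Vanishing of the Wronskian *)

Lemma Csqr_eq_RtoC_sqr_iff (z : C) (w : R) :
  (0 < w)%R -> z * z = RtoC (w * w) <-> z = RtoC w \/ z = - RtoC w.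
Proof.
  intros hw. split.
  - destruct z as [x y]. unfold Cmult, RtoC. simpl. intros H. injection H as Hre Him.
    assert (Hy : y = 0%R).
    { assert (Hxy : (x * y = 0)%R) by lra.
      destruct (Rmult_integral _ _ Hxy) as [Hx|Hy]; [subst x; nra|exact Hy]. }
    subst y. assert (Hx : ((x - w) * (x + w) = 0)%R) by nra.
    destruct (Rmult_integral _ _ Hx); [left|right]; unfold Copp; simpl; f_equal; lra.
  - intros [-> | ->]; rewrite RtoC_mult; ring.
Qed.

Lemma Z_nonpos_or_pos (j : Z) :
  (exists k : nat, j = (- Z.of_nat k)%Z) \/ (exists k : nat, j = Z.of_nat (S k)).
Proof.
  destruct (Z_le_gt_dec j 0);
    [left; exists (Z.to_nat (- j)) | right; exists (Z.to_nat (j - 1))]; lia.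
Qed.

Lemma qpoch_inf_eq_0_iff_powerRZ_nonpos (q : R) (w : C) : (0 < q < 1)%R ->
  qpoch_inf w q = 0 <-> exists k : nat, w = RtoC (powerRZ q (- Z.of_nat k)).
Proof.
  intros hq. rewrite qpoch_inf_eq_0_iff by lra.
  assert (Hpow : forall k : nat, RtoC (powerRZ q (- Z.of_nat k)) = / RtoC (q ^ k)).
  { intros k. rewrite powerRZ_neg', <- pow_powerRZ, RtoC_inv; [reflexivity|].
    pose proof (pow_lt q k ltac:(lra)). lra. }
  split; intros [k Hk]; exists k; rewrite Hpow in *.
  - transitivity (w * RtoC (q ^ k) / RtoC (q ^ k)); [field; now apply RtoC_pow_neq_0|].
    rewrite Hk. field. now apply RtoC_pow_neq_0.
  - rewrite Hk. field. now apply RtoC_pow_neq_0.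
Qed.

Lemma qpoch_inf_q_div_eq_0_iff_powerRZ_pos (q : R) (w : C) : (0 < q < 1)%R -> w <> 0 ->
  qpoch_inf (RtoC q * / w) q = 0 <-> exists k : nat, w = RtoC (powerRZ q (Z.of_nat (S k))).
Proof.
  intros hq hw. rewrite qpoch_inf_eq_0_iff by lra.
  assert (Hpow : forall k : nat, RtoC (powerRZ q (Z.of_nat (S k))) = RtoC q * RtoC (q ^ k))
    by (intros k; now rewrite <- pow_powerRZ, <- RtoC_mult).
  split; intros [k Hk]; exists k; rewrite Hpow in *.
  - transitivity (w * (RtoC q * / w * RtoC (q ^ k))); [|field; exact hw].
    rewrite Hk. ring.
  - rewrite Hk. field. split; [now apply RtoC_pow_neq_0|].
    intros E. injection E. lra.
Qed.

Lemma wronskian_closed_form_eq_0_iff (q : R) (z : C) : (0 < q < 1)%R -> z <> 0 ->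
  / z * (qpoch_inf (z * z) q * qpoch_inf (RtoC q * / (z * z)) q) = 0
  <-> exists j : Z, z * z = RtoC (powerRZ q j).
Proof.
  intros hq hz.
  transitivity (qpoch_inf (z * z) q = 0 \/ qpoch_inf (RtoC q * / (z * z)) q = 0).
  { split.
    - intros H. destruct (Cmult_eq_0 _ _ H) as [Hinv|Hprod]; [now destruct (Cinv_neq_0 z hz)|].
      exact (Cmult_eq_0 _ _ Hprod).
    - intros [H|H]; rewrite H; ring. }
  rewrite qpoch_inf_eq_0_iff_powerRZ_nonpos, qpoch_inf_q_div_eq_0_iff_powerRZ_pos
    by (exact hq || now apply Cmult_neq_0).
  split.
  - intros [[k Hk]|[k Hk]]; eexists; exact Hk.
  - intros [j Hj]. destruct (Z_nonpos_or_pos j) as [[k ->]|[k ->]]; [left|right]; now exists k.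
Qed.

Lemma sqr_powerRZ_sqrt (q : R) (j : Z) : (0 <= q)%R ->
  (powerRZ (sqrt q) j * powerRZ (sqrt q) j = powerRZ q j)%R.
Proof. intros hq. rewrite <- powerRZ_mult, sqrt_sqrt; lra. Qed.

Theorem proposition2p4 (q : R) (alpha beta z : C)
  (hq : (0 < q < 1)%R) (ha : (Cmod alpha < 1)%R) (hz : z <> RtoC 0) :
  solves_rec alpha beta q z (psi_plus alpha beta q z) /\
  solves_rec alpha beta q z (psi_minus alpha beta q z) /\
  (forall n : Z, (-1 <= n)%Z ->
     psi_plus alpha beta q z n * psi_minus alpha beta q z (n + 1)
     - psi_plus alpha beta q z (n + 1) * psi_minus alpha beta q z n
     = / z * (qpoch_inf (z * z) q * qpoch_inf (RtoC q * / (z * z)) q)) /\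
  (lin_indep (psi_plus alpha beta q z) (psi_minus alpha beta q z) <->
     ~ (exists j : Z, z = RtoC (powerRZ (sqrt q) j) \/ z = - RtoC (powerRZ (sqrt q) j))).
Proof.
  assert (hq' : (0 <= q < 1)%R) by lra.
  pose proof (psi_plus_three_term alpha beta q z hq' ha hz) as Hplus.
  pose proof (psi_minus_three_term alpha beta q z hq' ha hz) as Hminus.
  pose proof (psi_wronskian alpha beta q z hq' ha hz) as HW.
  split; [now apply solves_rec_three_term|split; [now apply solves_rec_three_term|split]].
  { exact HW. }
  rewrite (lin_indep_iff_wronskian _ _ _ Hplus Hminus), HW by lia.
  apply not_iff_compat. rewrite (wronskian_closed_form_eq_0_iff q z hq hz).
  split; intros [j Hj]; exists j.
  - apply Csqr_eq_RtoC_sqr_iff; [apply powerRZ_lt, sqrt_lt_R0; lra|].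
    now rewrite sqr_powerRZ_sqrt by lra.
  - rewrite <- sqr_powerRZ_sqrt by lra.
    apply Csqr_eq_RtoC_sqr_iff; [apply powerRZ_lt, sqrt_lt_R0; lra|exact Hj].
Qed.
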